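(* A valued Abelian group $(G,+,p)$ is of class $\mathcal{O}_0$ if and only if it may be enlarged to a valued Abelian group $(\tilde G,+,\tilde p)$ such that the set of elements of finite order of $\tilde G$ is dense in $\tilde G$.
   Context: A value on an Abelian group $G$ is $p\colon G\to[0,\infty)$ with $p(x)=0\iff x=0$, $p(-x)=p(x)$, $p(x+y)\leqslant p(x)+p(y)$; it induces the metric $p(x-y)$. $(G,+,p)$ is of class $\mathcal{O}_0$ if $\lim_{n\to\infty}p(na)/n=0$ for every $a\in G$. Enlarging means $G\subseteq\tilde G$, the addition of $\tilde G$ extends that of $G$ and $\tilde p$ extends $p$. *)

From HB Require Import structures.
From mathcomp Require Import all_boot all_order all_algebra.
From mathcomp Require Import all_classical all_reals all_analysis.
Set Implicit Arguments. Unset Strict Implicit. Unset Printing Implicit Defensive.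
Import Order.TTheory GRing.Theory Num.Theory.
Local Open Scope classical_set_scope.
Local Open Scope ring_scope.

Definition is_value (R : realType) (G : zmodType) (p : G -> R) : Prop :=
  (forall x, 0 <= p x) /\
  (forall x, p x = 0 <-> x = 0) /\
  (forall x, p (- x) = p x) /\
  (forall x y, p (x + y) <= p x + p y).

Definition class_O0 (R : realType) (G : zmodType) (p : G -> R) : Prop :=
  forall a : G, (fun n : nat => p (a *+ n) / n%:R) @ \oo --> (0 : R^o).

Definition finite_order (G : zmodType) (x : G) : Prop :=
  exists n : nat, (0 < n)%N /\ x *+ n = 0.

Definition dense_for (R : realType) (G : zmodType) (q : G -> R)
  (S : G -> Prop) : Prop :=
  forall (x : G) (e : R), 0 < e -> exists y, S y /\ q (x - y) < e.

(* Necessity: if [q] extends [p] and [y] is a torsion element of order [m]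
   with [q (a - y) < e], then [p (n a) <= n e + \sum_(k < m) q (k y)], so
   [p (n a) / n] is eventually below [2 e].
   Sufficiency: let [T] be the direct sum of the groups [Z/(n+1)] indexed by
   the pairs [(g, n)], and [u_(g,n) := (g, delta_(g,n))] in [G * T], so that
   [(n+1) u_(g,n) = ((n+1) g, 0)].  Value [G * T] by the infimum of
   [p (g - \sum_i k_i g_i) + \sum_i |k_i| w_i] over all ways of writing
   [(g, t) = (g - \sum_i k_i g_i, 0) + \sum_i k_i u_i], where
   [w_(g,n) := (p ((n+1) g) + 1) / (n+1)].  A multiple of [n+1] of [u_(g,n)]
   lies in [G] and costs at least its [p]-value, so the new value extends [p];
   the [+ 1] makes it definite on the [T]-coordinates.  Finally
   [(g, t) - (0, t - delta_(g,n)) = u_(g,n)] has value at most [w_(g,n)],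
   which tends to [0] when [p] is of class [O_0]. *)

From HB Require Import structures.
From mathcomp Require Import all_boot all_order all_algebra.
From mathcomp Require Import all_classical all_reals all_analysis.
From mathcomp Require Import ring lra.
Import Order.TTheory GRing.Theory Num.Theory.
Local Open Scope classical_set_scope.
Local Open Scope ring_scope.
Set Implicit Arguments. Unset Strict Implicit. Unset Printing Implicit Defensive.

Lemma big_uniq_support (V : zmodType) (I : eqType) (S S' : seq I) (F : I -> V) :
  uniq S -> uniq S' -> {subset S <= S'} -> (forall i, i \notin S -> F i = 0) ->
  \sum_(i <- S') F i = \sum_(i <- S) F i.
Proof.
move=> uS uS' sub_SS' F0.
rewrite (bigID (mem S)) /= [X in _ + X]big1 ?addr0; last by move=> i /F0.
rewrite -big_filter; apply: perm_big; apply: uniq_perm; rewrite ?filter_uniq //.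
by move=> i; rewrite mem_filter andb_idr // => /sub_SS'.
Qed.

Lemma dvdz_subr_mod (n a b : int) : (n %| a - (b %% n)%Z)%Z = (n %| a - b)%Z.
Proof. by rewrite -!eqz_mod_dvd modz_mod. Qed.

Lemma pair_mulrn (U V : zmodType) (a : U) (b : V) n :
  ((a, b) : U * V) *+ n = (a *+ n, b *+ n).
Proof. by elim: n => [|n IH]; rewrite ?mulr0n // !mulrS IH. Qed.

Definition inl_zmod (U V : zmodType) (a : U) : U * V := (a, 0).

Lemma inl_zmod_is_zmod_morphism (U V : zmodType) : zmod_morphism (@inl_zmod U V).
Proof. by move=> a b; rewrite /inl_zmod; congr pair; rewrite subr0. Qed.

HB.instance Definition _ (U V : zmodType) :=
  GRing.isZmodMorphism.Build U (U * V)%type (@inl_zmod U V)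
    (@inl_zmod_is_zmod_morphism U V).

Section ValueTheory.
Variables (R : realType) (V : zmodType) (q : V -> R).
Hypothesis hq : is_value q.

Lemma value_ge0 x : 0 <= q x.
Proof. by case: hq. Qed.

Lemma value_eq0 x : (q x = 0) <-> (x = 0).
Proof. by case: hq => _ []. Qed.

Lemma value0 : q 0 = 0.
Proof. exact/value_eq0. Qed.

Lemma valueN x : q (- x) = q x.
Proof. by case: hq => _ [_ []]. Qed.

Lemma valueD x y : q (x + y) <= q x + q y.
Proof. by case: hq => _ [_ [_]]. Qed.

Lemma value_sum (I : Type) (s : seq I) (F : I -> V) :
  q (\sum_(i <- s) F i) <= \sum_(i <- s) q (F i).
Proof.
elim: s => [|a s IH]; first by rewrite !big_nil value0.
by rewrite !big_cons; apply: le_trans (valueD _ _) _; apply: lerD.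
Qed.

Lemma value_Mn x n : q (x *+ n) <= n%:R * q x.
Proof.
elim: n => [|n IH]; first by rewrite mulr0n value0 mul0r.
rewrite mulrS -natr1 mulrDl mul1r addrC.
by apply: le_trans (valueD _ _) _; apply: lerD.
Qed.

Lemma value_Mz x m : q (x *~ m) <= `|m%:~R : R| * q x.
Proof.
case: m => n; first by rewrite normr_nat; apply: value_Mn.
by rewrite NegzE mulrNz valueN mulrNz normrN normr_nat; apply: value_Mn.
Qed.

Lemma value_Mn_torsion_near x y m : (0 < m)%N -> y *+ m = 0 -> forall n,
  q (x *+ n) <= n%:R * q (x - y) + \sum_(k < m) q (y *+ k).
Proof.
move=> m_gt0 ym n.
have -> : x *+ n = (x - y) *+ n + y *+ (n %% m).
  by rewrite mulrnBl [in y *+ n](divn_eq n m) mulrnDr mulnC mulrnA ym mul0rn add0r subrK.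
apply: le_trans (valueD _ _) _; apply: lerD; first exact: value_Mn.
rewrite (bigD1 (Ordinal (ltn_pmod n m_gt0))) //= lerDl.
by apply: sumr_ge0 => k _; apply: value_ge0.
Qed.

End ValueTheory.

Lemma class_O0_of_dense_torsion (R : realType) (G H : zmodType)
    (f : {additive G -> H}) (p : G -> R) (q : H -> R) :
  is_value q -> (forall x, q (f x) = p x) -> dense_for q (@finite_order H) ->
  class_O0 p.
Proof.
move=> hq qf dense a; apply/cvgrPdist_lt => e e_gt0.
have e2_gt0 : 0 < e / 2 by rewrite divr_gt0.
have [y [[m [m_gt0 ym]] ay]] := dense (f a) (e / 2) e2_gt0.
set C := \sum_(k < m) q (y *+ k).
have bound n : p (a *+ n) <= n%:R * (e / 2) + C.
  rewrite -qf raddfMn; apply: le_trans (value_Mn_torsion_near hq (f a) m_gt0 ym n) _.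
  by rewrite lerD2r ler_wpM2l // ltW.
apply: filterS2 (nbhs_infty_gtr (2 * C / e)) (nbhs_infty_gt 0) => n Cn n_gt0.
have n_pos : 0 < (n%:R : R) by rewrite ltr0n.
have pa_ge0 : 0 <= p (a *+ n) by rewrite -qf (value_ge0 hq).
rewrite sub0r normrN ger0_norm ?divr_ge0 // ltr_pdivrMr //.
apply: le_lt_trans (bound n) _.
move: Cn; rewrite ltr_pdivrMr // => Cn.
nra.
Qed.

Section CyclicSum.
Variables (I : eqType) (m : I -> nat).

Definition cyclic_mod (i : I) : int := (m i).+1.

(* [cyclic_sum] is the direct sum of the [Z/(m i + 1)], each coordinate stored
   as its least nonnegative residue. *)
Definition cyclic_reduced (t : I -> int) : Prop :=
  (forall i, t i = (t i %% cyclic_mod i)%Z) /\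
  exists S : seq I, forall i, i \notin S -> t i = 0.

Definition cyclic_sum := {t : I -> int | cyclic_reduced t}.

Lemma cyclic_sum_inj (x y : cyclic_sum) : sval x = sval y -> x = y.
Proof.
case: x y => [x hx] [y hy] /= exy; subst y.
by rewrite (Prop_irrelevance hx hy).
Qed.

Lemma cyclic_reduced0 : cyclic_reduced (fun=> 0).
Proof. by split => [i|]; [rewrite mod0z | exists [::]]. Qed.

Lemma cyclic_reducedD (x y : cyclic_sum) :
  cyclic_reduced (fun i => (sval x i + sval y i) %% cyclic_mod i)%Z.
Proof.
case: x y => [x [_ [S xS]]] [y [_ [S' yS']]] /=.
split => [i|]; first by rewrite modz_mod.
exists (S ++ S') => i; rewrite mem_cat negb_or => /andP[iS iS'].
by rewrite xS // yS' // mod0z.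
Qed.

Lemma cyclic_reducedN (x : cyclic_sum) :
  cyclic_reduced (fun i => (- sval x i) %% cyclic_mod i)%Z.
Proof.
case: x => [x [_ [S xS]]] /=.
split => [i|]; first by rewrite modz_mod.
by exists S => i iS; rewrite xS // oppr0 mod0z.
Qed.

Definition cyclic_zero : cyclic_sum := exist _ _ cyclic_reduced0.
Definition cyclic_add (x y : cyclic_sum) : cyclic_sum := exist _ _ (cyclic_reducedD x y).
Definition cyclic_opp (x : cyclic_sum) : cyclic_sum := exist _ _ (cyclic_reducedN x).

Lemma cyclic_addA : associative cyclic_add.
Proof.
move=> x y z; apply: cyclic_sum_inj; apply: funext => i /=.
by rewrite modzDml modzDmr addrA.
Qed.

Lemma cyclic_addC : commutative cyclic_add.
Proof. by move=> x y; apply: cyclic_sum_inj; apply: funext => i /=; rewrite addrC. Qed.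

Lemma cyclic_add0 : left_id cyclic_zero cyclic_add.
Proof.
move=> x; apply: cyclic_sum_inj; apply: funext => i /=.
by rewrite add0r -(svalP x).1.
Qed.

Lemma cyclic_addN : left_inverse cyclic_zero cyclic_opp cyclic_add.
Proof.
move=> x; apply: cyclic_sum_inj; apply: funext => i /=.
by rewrite modzDml addNr mod0z.
Qed.

End CyclicSum.

HB.instance Definition _ (I : eqType) (m : I -> nat) := gen_eqMixin (cyclic_sum m).
HB.instance Definition _ (I : eqType) (m : I -> nat) := gen_choiceMixin (cyclic_sum m).
HB.instance Definition _ (I : eqType) (m : I -> nat) :=
  GRing.isZmodule.Build (cyclic_sum m)
    (@cyclic_addA I m) (@cyclic_addC I m) (@cyclic_add0 I m) (@cyclic_addN I m).

Section CyclicSumTheory.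
Variables (I : eqType) (m : I -> nat).
Implicit Types (t : cyclic_sum m) (i : I).

Lemma cyclic_sum_neq0 t : t != 0 -> exists i, sval t i != 0.
Proof.
move=> t_neq0; apply: contra_notP (negP t_neq0) => t_eq0; apply/eqP.
apply: cyclic_sum_inj; apply: funext => i /=; apply/eqP.
by apply: contra_notT t_eq0 => ti; exists i.
Qed.

Lemma cyclic_sum_coef_neq0 t i k :
  (cyclic_mod m i %| k - sval t i)%Z -> sval t i != 0 -> k != 0.
Proof.
case: t => t [tr _] /= dvd_k; apply: contra => /eqP k0; move: dvd_k.
rewrite k0 sub0r rpredN => dvd_t; apply/eqP; rewrite tr.
exact/dvdz_mod0P.
Qed.

Lemma cyclic_sum_Mn t n i :
  sval (t *+ n) i = ((sval t i * n%:Z) %% cyclic_mod m i)%Z.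
Proof.
elim: n => [|n IH]; first by rewrite mulr0n mulr0 mod0z.
by rewrite mulrS /= IH modzDmr -addn1 PoszD mulrDr mulr1 addrC.
Qed.

Lemma cyclic_sum_torsion t : exists n, (0 < n)%N /\ t *+ n = 0.
Proof.
have [_ [S tS]] := svalP t.
exists (\prod_(i <- S) (m i).+1)%N; split; first exact: prodn_gt0.
apply: cyclic_sum_inj; apply: funext => i; rewrite cyclic_sum_Mn /=.
have [iS|iS] := boolP (i \in S); last by rewrite tS // mul0r mod0z.
apply/dvdz_mod0P; apply: dvdz_mull.
by rewrite /cyclic_mod dvdzE /= (big_rem i) //= dvdn_mulr.
Qed.

Lemma cyclic_reduced_unit i0 :
  cyclic_reduced m (fun i => if i == i0 then (1 %% cyclic_mod m i)%Z else 0).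
Proof.
split => [i|]; first by case: ifP => _; rewrite ?modz_mod ?mod0z.
by exists [:: i0] => i; rewrite inE => /negbTE ->.
Qed.

Definition cyclic_unit i0 : cyclic_sum m := exist _ _ (cyclic_reduced_unit i0).

End CyclicSumTheory.

Arguments cyclic_unit {I m}.

Section TorsionExtension.
Variables (R : realType) (G : zmodType) (p : G -> R).
Hypothesis hp : is_value p.

Local Notation I := (G * nat)%type.
Local Notation T := (cyclic_sum (@snd G nat)).
Local Notation n_ i := (cyclic_mod (@snd G nat) i).

Definition gen_weight (i : I) : R := (p (i.1 *+ i.2.+1) + 1) / i.2.+1%:R.

Definition decomp := ((I -> int) * seq I)%type.

(* [(k, S)] decomposes [t] when [t = \sum_(i <- S) k_i delta_i]; then
   [(g, t) = (g - \sum_(i <- S) k_i i.1, 0) + \sum_(i <- S) k_i u_i]. *)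
Definition decomposes (t : T) (r : decomp) : Prop :=
  [/\ uniq r.2, forall i, i \notin r.2 -> r.1 i = 0 &
      forall i, (n_ i %| r.1 i - sval t i)%Z].

Definition decomp_cost (g : G) (r : decomp) : R :=
  p (g - \sum_(i <- r.2) i.1 *~ r.1 i) +
  \sum_(i <- r.2) `|(r.1 i)%:~R : R| * gen_weight i.

Definition ext_value (h : G * T) : R :=
  inf [set decomp_cost h.1 r | r in decomposes h.2].

Lemma gen_weight_gt0 i : 0 < gen_weight i.
Proof.
rewrite divr_gt0 ?ltr0n //.
by apply: lt_le_trans ltr01 _; rewrite lerDr (value_ge0 hp).
Qed.

Lemma gen_weight_ge0 i : 0 <= gen_weight i.
Proof. exact: ltW (gen_weight_gt0 i). Qed.

Lemma decomp_cost_ge0 g r : 0 <= decomp_cost g r.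
Proof.
rewrite addr_ge0 ?(value_ge0 hp) // sumr_ge0 // => i _.
by rewrite mulr_ge0 ?gen_weight_ge0.
Qed.

Lemma ext_value_le_cost h r : decomposes h.2 r -> ext_value h <= decomp_cost h.1 r.
Proof.
move=> hr; apply: ge_inf; last by exists r.
by exists 0 => _ [r' _ <-]; apply: decomp_cost_ge0.
Qed.

Lemma ext_value_ge h y :
  (forall r, decomposes h.2 r -> y <= decomp_cost h.1 r) -> y <= ext_value h.
Proof.
move=> y_lb; apply: lb_le_inf => [|_ [r hr <-]]; last exact: y_lb.
case: h y_lb => g t _; have [_ [S tS]] := svalP t.
exists (decomp_cost g (sval t, undup S)), (sval t, undup S) => //.
split => [||i] /=; rewrite ?undup_uniq ?subrr ?dvdz0 //.
by move=> i; rewrite mem_undup => /tS.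
Qed.

Lemma value_Mz_gen i k : (n_ i %| k)%Z -> p (i.1 *~ k) <= `|k%:~R : R| * gen_weight i.
Proof.
case/dvdzP => l ->; rewrite mulrC mulrzA.
apply: le_trans (value_Mz hp _ _) _.
rewrite intrM normrM /gen_weight /cyclic_mod /= normr_nat.
have -> : i.2.+1%:R * `|l%:~R : R| * ((p (i.1 *+ i.2.+1) + 1) / i.2.+1%:R)
          = `|l%:~R| * (p (i.1 *+ i.2.+1) + 1).
  by field; rewrite addrC natr1 pnatr_eq0.
by rewrite ler_wpM2l // lerDl.
Qed.

Lemma decomp_cost_zero g r : decomposes 0 r -> p g <= decomp_cost g r.
Proof.
case: r => k S; rewrite /decomposes /decomp_cost /= => -[_ _ dvd_k].
rewrite -{1}(subrK (\sum_(i <- S) i.1 *~ k i) g).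
apply: le_trans (valueD hp _ _) _; rewrite lerD2l.
apply: le_trans (value_sum hp _ _) _; apply: ler_sum => i _.
by apply: value_Mz_gen; rewrite -[k i]subr0.
Qed.

Lemma decomp_cost_ge_weight g t r i :
  decomposes t r -> sval t i != 0 -> gen_weight i <= decomp_cost g r.
Proof.
case: r => k S; rewrite /decomposes /decomp_cost /= => -[uS kS dvd_k] ti.
have ki := cyclic_sum_coef_neq0 (dvd_k i) ti.
have iS : i \in S by apply: contraT => /kS ki0; rewrite ki0 eqxx in ki.
rewrite [X in _ + X](bigD1_seq i) //=.
have other_ge0 : 0 <= \sum_(j <- S | j != i) `|(k j)%:~R : R| * gen_weight j.
  by apply: sumr_ge0 => j _; rewrite mulr_ge0 ?gen_weight_ge0.
have ki_ge1 : gen_weight i <= `|(k i)%:~R : R| * gen_weight i.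
  rewrite ler_peMl ?gen_weight_ge0 //.
  by rewrite -intr_norm ler1z -gtz0_ge1 normr_gt0.
have := value_ge0 hp (g - \sum_(j <- S) j.1 *~ k j); lra.
Qed.

Definition decompN (r : decomp) : decomp := (fun i => - r.1 i, r.2).

Definition decompD (r r' : decomp) : decomp :=
  (fun i => r.1 i + r'.1 i, undup (r.2 ++ r'.2)).

Lemma decomposesN t r : decomposes t r -> decomposes (- t) (decompN r).
Proof.
case: r => k S; rewrite /decomposes /= => -[uS kS dvd_k].
split => // [i /kS ->|i]; first by rewrite oppr0.
by rewrite dvdz_subr_mod -opprD rpredN.
Qed.

Lemma decomp_costN g r : decomp_cost (- g) (decompN r) = decomp_cost g r.
Proof.
rewrite /decomp_cost /=; congr (_ + _); last first.
  by apply: eq_bigr => i _; rewrite mulrNz normrN.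
under eq_bigr do rewrite mulrNz.
by rewrite sumrN -opprD valueN.
Qed.

Lemma decomposesD t t' r r' :
  decomposes t r -> decomposes t' r' -> decomposes (t + t') (decompD r r').
Proof.
case: r r' => k S [k' S']; rewrite /decomposes /= => -[_ kS dvd_k] [_ kS' dvd_k'].
split => [|i|i]; first exact: undup_uniq.
  by rewrite mem_undup mem_cat negb_or => /andP[/kS -> /kS' ->]; rewrite addr0.
by rewrite dvdz_subr_mod opprD addrACA rpredD.
Qed.

Lemma decomp_costD g g' t t' r r' : decomposes t r -> decomposes t' r' ->
  decomp_cost (g + g') (decompD r r') <= decomp_cost g r + decomp_cost g' r'.
Proof.
case: r r' => k S [k' S']; rewrite /decomposes /decomp_cost /= => -[uS kS _] [uS' kS' _].
set U := undup (S ++ S').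
have uU : uniq U := undup_uniq _.
have sub_S : {subset S <= U} by move=> i iS; rewrite mem_undup mem_cat iS.
have sub_S' : {subset S' <= U} by move=> i iS'; rewrite mem_undup mem_cat iS' orbT.
have shift_split : \sum_(i <- U) i.1 *~ (k i + k' i) =
    \sum_(i <- S) i.1 *~ k i + \sum_(i <- S') i.1 *~ k' i.
  rewrite -(big_uniq_support uS uU sub_S); last by move=> i /kS ->; rewrite mulr0z.
  rewrite -(big_uniq_support uS' uU sub_S'); last by move=> i /kS' ->; rewrite mulr0z.
  by rewrite -big_split; apply: eq_bigr => i _; rewrite mulrzDr.
have weight_split : \sum_(i <- U) `|(k i + k' i)%:~R : R| * gen_weight i <=
    \sum_(i <- S) `|(k i)%:~R : R| * gen_weight i +
    \sum_(i <- S') `|(k' i)%:~R : R| * gen_weight i.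
  rewrite -(big_uniq_support uS uU sub_S); last by move=> i /kS ->; rewrite normr0 mul0r.
  rewrite -(big_uniq_support uS' uU sub_S');
    last by move=> i /kS' ->; rewrite normr0 mul0r.
  rewrite -big_split; apply: ler_sum => i _ /=.
  by rewrite -mulrDl ler_wpM2r ?gen_weight_ge0 ?intrD ?ler_normD.
rewrite shift_split opprD addrACA.
have := valueD hp (g - \sum_(i <- S) i.1 *~ k i) (g' - \sum_(i <- S') i.1 *~ k' i).
lra.
Qed.

Lemma ext_value_inl g : ext_value (inl_zmod T g) = p g.
Proof.
apply/eqP; rewrite eq_le; apply/andP; split; last first.
  by apply: ext_value_ge => r /(decomp_cost_zero g).
have r0 : decomposes (0 : T) (fun=> 0, [::]) by split => // i; rewrite subr0 dvdz0.
apply: le_trans (ext_value_le_cost (h := (g, 0)) r0) _.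
by rewrite /decomp_cost /= !big_nil subr0 addr0.
Qed.

Lemma ext_valueN_le h : ext_value (- h) <= ext_value h.
Proof.
case: h => g t; apply: ext_value_ge => r hr /=.
by rewrite -decomp_costN; exact: (ext_value_le_cost (h := (- g, - t))) _ (decomposesN hr).
Qed.

Lemma ext_valueD h h' : ext_value (h + h') <= ext_value h + ext_value h'.
Proof.
case: h h' => g t [g' t'].
have le_costs r r' : decomposes t r -> decomposes t' r' ->
    ext_value ((g, t) + (g', t')) <= decomp_cost g r + decomp_cost g' r'.
  move=> tr t'r'; apply: le_trans (decomp_costD g g' tr t'r').
  exact: (ext_value_le_cost (h := (g + g', t + t'))) (decomposesD tr t'r').
rewrite -lerBlDl; apply: ext_value_ge => r' t'r' /=.
rewrite lerBlDl -lerBlDr; apply: ext_value_ge => r tr /=.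
by rewrite lerBlDr; apply: le_costs.
Qed.

Lemma ext_value_is_value : is_value ext_value.
Proof.
split=> [h|]; first by apply: ext_value_ge => r _; apply: decomp_cost_ge0.
split=> [[g t]|]; last split=> [h|]; last exact: ext_valueD.
- split=> [q0|[-> ->]]; last by rewrite (ext_value_inl (0 : G)) value0.
  have t0 : t = 0.
    apply: contra_eq q0 => /cyclic_sum_neq0 [i ti].
    rewrite gt_eqF // (lt_le_trans (gen_weight_gt0 i)) //.
    by apply: ext_value_ge => r tr; apply: decomp_cost_ge_weight tr ti.
  by move: q0; rewrite t0 (ext_value_inl g) => /(value_eq0 hp) ->.
- by apply/eqP; rewrite eq_le ext_valueN_le -{1}[h]opprK ext_valueN_le.
Qed.

Lemma ext_value_gen g N : ext_value (g, cyclic_unit (g, N)) <= gen_weight (g, N).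
Proof.
have r1 : decomposes (cyclic_unit (g, N))
                     (fun i => if i == (g, N) then 1 else 0, [:: (g, N)]).
  split=> // [i|i] /=; first by rewrite inE => /negbTE ->.
  by case: ifP => _; rewrite ?dvdz_subr_mod subrr dvdz0.
apply: le_trans (ext_value_le_cost (h := (g, cyclic_unit (g, N))) r1) _.
by rewrite /decomp_cost /= !big_seq1 eqxx subrr value0 // add0r normr1 mul1r.
Qed.

Lemma ext_value_dense_torsion :
  class_O0 p -> dense_for ext_value (@finite_order (G * T)%type).
Proof.
move=> pO0 [g t] e e_gt0.
have e2_gt0 : 0 < e / 2 by rewrite divr_gt0.
have /cvgrPdist_lt pg_small := pO0 g.
have : \forall n \near \oo,
    [/\ `|0 - p (g *+ n) / n%:R| < e / 2, 2 / e < n%:R & (0 < n)%N].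
  near=> n; split.
  - by near: n; exact: pg_small.
  - by near: n; exact: nbhs_infty_gtr.
  - by near: n; exact: nbhs_infty_gt.
move=> /filter_ex [n [pgn ne n_gt0]].
move: n n_gt0 pgn ne => [//|N] _ pgn ne.
exists (0, t - cyclic_unit (g, N)); split.
  have [k [k_gt0 tk]] := cyclic_sum_torsion (t - cyclic_unit (g, N)).
  by exists k; rewrite pair_mulrn mul0rn tk.
have -> : (g, t) - (0, t - cyclic_unit (g, N)) = (g, cyclic_unit (g, N)) :> G * T.
  by congr pair; rewrite /= ?subr0 // opprB addrC subrK.
apply: le_lt_trans (ext_value_gen g N) _.
rewrite sub0r normrN ger0_norm ?divr_ge0 ?(value_ge0 hp) // in pgn.
have inv_small : N.+1%:R^-1 < e / 2.
  by rewrite -[e / 2]invf_div ltf_pV2 ?posrE ?ltr0n ?divr_gt0.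
by rewrite /gen_weight /= mulrDl mul1r [e]splitr ltrD.
Unshelve. all: end_near.
Qed.

End TorsionExtension.

Unset Implicit Arguments.

Theorem theorem2p12 (R : realType) (G : zmodType) (p : G -> R)
  (hp : is_value p) :
  class_O0 p <->
  exists (H : zmodType) (f : {additive G -> H}) (q : H -> R),
    injective f /\ is_value q /\ (forall x : G, q (f x) = p x) /\
    dense_for q (@finite_order H).
Proof.
split=> [pO0|[H [f [q [_ [hq [qf dense]]]]]]]; last first.
  exact: class_O0_of_dense_torsion hq qf dense.
exists (G * cyclic_sum (@snd G nat))%type, (inl_zmod _ : {additive G -> _}),
  (ext_value p).
split; first by move=> x y [].
split; first exact: ext_value_is_value.
split; first exact: ext_value_inl.
exact: ext_value_dense_torsion.
Qed.
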